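(* Let $L$ be a commutative incline with the arithmetic geometric property. Then for every $k\ge 1$ and all $x_1,\dots,x_k\in L$, $$\bigoplus_{i=1}^{k} x_i^{\otimes 2}=\Big(\bigoplus_{i=1}^{k} x_i\Big)^{\otimes 2},$$ where $x^{\otimes 2}=x\otimes x$.
   Context: An incline is a nonempty set $L$ with two binary operations $\oplus,\otimes$ such that $(L,\oplus)$ is a semilattice ($\oplus$ associative, commutative, idempotent), $(L,\otimes)$ is a semigroup, $x\otimes(y\oplus z)=(x\otimes y)\oplus(x\otimes z)$ and $x\oplus(x\otimes y)=x$ for all $x,y,z\in L$. The relation $x\le y\iff x\oplus y=y$ is a partial order with $x\oplus y$ the least upper bound. $L$ is commutative if $\otimes$ is commutative. $L$ has the arithmetic geometric property (AG-property) if $x\otimes y\le (x\otimes x)\oplus(y\otimes y)$ for all $x,y\in L$. *)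

From Stdlib Require Import List.

Record is_incline (L : Type) (add mul : L -> L -> L) : Prop := {
  inc_add_assoc : forall x y z, add x (add y z) = add (add x y) z;
  inc_add_comm : forall x y, add x y = add y x;
  inc_add_idem : forall x, add x x = x;
  inc_mul_assoc : forall x y z, mul x (mul y z) = mul (mul x y) z;
  inc_distr_l : forall x y z, mul x (add y z) = add (mul x y) (mul x z);
  inc_absorb : forall x y, add x (mul x y) = x
}.

Definition inc_le {L : Type} (add : L -> L -> L) (x y : L) : Prop := add x y = y.

Definition is_commutative {L : Type} (mul : L -> L -> L) : Prop :=
  forall x y, mul x y = mul y x.

Definition AG_property {L : Type} (add mul : L -> L -> L) : Prop :=
  forall x y, inc_le add (mul x y) (add (mul x x) (mul y y)).

Fixpoint bigadd {L : Type} (add : L -> L -> L) (f : nat -> L) (k : nat) : L :=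
  match k with
  | 0 => f 0 (* unused: only k >= 1 is meaningful *)
  | 1 => f 1
  | S k' => add (bigadd add f k') (f (S k'))
  end.

(* Expanding the square of x_1 ⊕ ... ⊕ x_k gives the join of all products
   x_i ⊗ x_j.  The diagonal terms are the squares, and by the AG-property every
   cross term satisfies x_i ⊗ x_j ≤ x_i ⊗ x_i ⊕ x_j ⊗ x_j, so it is absorbed. *)

Section Incline.

Variables (L : Type) (add mul : L -> L -> L).
Hypothesis HL : is_incline L add mul.

Local Infix "⊕" := add (at level 50, left associativity).
Local Infix "⊗" := mul (at level 40, left associativity).

Let addA := inc_add_assoc _ _ _ HL.
Let addC := inc_add_comm _ _ _ HL.
Let addxx := inc_add_idem _ _ _ HL.

Lemma inc_le_absorb a b : inc_le add a b -> b ⊕ a = b.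
Proof. unfold inc_le; intros Hab; rewrite addC; exact Hab. Qed.

Lemma inc_le_add a b c d :
  inc_le add a b -> inc_le add c d -> inc_le add (a ⊕ c) (b ⊕ d).
Proof.
  unfold inc_le; intros Hab Hcd.
  rewrite <- addA, (addA c b d), (addC c b), <- (addA b c d), Hcd.
  rewrite addA, Hab; reflexivity.
Qed.

Lemma add_distr_add_r a b c : (a ⊕ c) ⊕ (b ⊕ c) = (a ⊕ b) ⊕ c.
Proof.
  rewrite <- (addA a c), (addC b c), (addA c c b), addxx, (addC c b).
  apply addA.
Qed.

Lemma bigadd_S (f : nat -> L) k :
  1 <= k -> bigadd add f (S k) = bigadd add f k ⊕ f (S k).
Proof. destruct k as [|k]; [inversion 1 | reflexivity]. Qed.

Hypothesis Hc : is_commutative mul.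

Lemma mul_addl a b c : (a ⊕ b) ⊗ c = a ⊗ c ⊕ b ⊗ c.
Proof. rewrite Hc, (inc_distr_l _ _ _ HL), (Hc c a), (Hc c b); reflexivity. Qed.

Lemma sqr_add a b : (a ⊕ b) ⊗ (a ⊕ b) = (a ⊗ a ⊕ b ⊗ b) ⊕ a ⊗ b.
Proof.
  rewrite (inc_distr_l _ _ _ HL), !mul_addl, (Hc b a).
  rewrite (addC (a ⊗ b) (b ⊗ b)); apply add_distr_add_r.
Qed.

Hypothesis HAG : AG_property add mul.

Lemma mul_bigadd_le (x : nat -> L) (y : L) k : 1 <= k ->
  inc_le add (bigadd add x k ⊗ y) (bigadd add (fun i => x i ⊗ x i) k ⊕ y ⊗ y).
Proof.
  induction 1 as [|k hk IH]; [apply HAG|].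
  rewrite !bigadd_S by exact hk.
  rewrite mul_addl, <- add_distr_add_r.
  apply inc_le_add; [exact IH | apply HAG].
Qed.

End Incline.

Theorem mainTheorem2 (L : Type) (add mul : L -> L -> L)
  (HL : is_incline L add mul) (Hc : is_commutative mul) (HAG : AG_property add mul)
  (k : nat) (hk : 1 <= k) (x : nat -> L) :
  bigadd add (fun i => mul (x i) (x i)) k = mul (bigadd add x k) (bigadd add x k).
Proof.
  induction hk as [|k hk IH]; [reflexivity|].
  rewrite !bigadd_S by exact hk.
  rewrite (sqr_add _ _ _ HL Hc), <- IH.
  symmetry; apply (inc_le_absorb _ _ _ HL).
  exact (mul_bigadd_le _ _ _ HL Hc HAG x _ _ hk).
Qed.
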